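(* For the measured train track $(\tau_0, \left(\begin{smallmatrix} x \\ y \end{smallmatrix}\right))$ we have the following. \begin{enumerate} \item If $y>qx$ then $(\tau_0, \left(\begin{smallmatrix} x \\ y \end{smallmatrix}\right))$ admits $q$ left splittings consecutively and $$(\tau_0, \left(\begin{smallmatrix} x \\ y \end{smallmatrix}\right)) \overset{L}{\rightharpoonup}{}^q \ f_L^q(\tau_0, L^{-q}\left(\begin{smallmatrix} x \\ y \end{smallmatrix}\right)).$$ \item If $x>py$ then $(\tau_0, \left(\begin{smallmatrix} x \\ y \end{smallmatrix}\right))$ admits $p$ right splittings consecutively and $$(\tau_0, \left(\begin{smallmatrix} x \\ y \end{smallmatrix}\right)) \overset{R}{\rightharpoonup}{}^p \ f_R^p (\tau_0, R^{-p}\left(\begin{smallmatrix} x \\ y \end{smallmatrix}\right)).$$ \end{enumerate}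
   Context: $\Sigma_{1,1}=(\mathbb{R}^2\setminus\mathbb{Z}^2)/\mathbb{Z}^2$ is the once-punctured torus; $f_L,f_R$ are the homeomorphisms induced by $L= \left(\begin{smallmatrix}1 & 0 \\ 1 & 1 \end{smallmatrix}\right)$ and $R= \left(\begin{smallmatrix}1 & 1 \\0 & 1\end{smallmatrix}\right)$; $p,q$ are positive integers. The base train track $\tau_0$ is obtained from the simple closed curves of slope $0$ and $\infty$ by flattening the NW and SE right angles at their intersection; it has one large and two small branches, and the measure $\left(\begin{smallmatrix} x \\ y \end{smallmatrix}\right)$ gives weight $x$ to the horizontal small branch, $y$ to the vertical small branch and $x+y$ to the large branch. For a homeomorphism $\phi$, $\phi(\tau,\mu)=(\phi(\tau),\phi_*\mu)$ with $\phi_*\mu(e)=\mu(\phi^{-1}(e))$. $\overset{L}{\rightharpoonup}$ (resp. $\overset{R}{\rightharpoonup}$) denotes a maximal splitting (simultaneous splitting along all large branches of maximal weight) consisting of left (resp. right) splittings, and an exponent means that many consecutive ones. *)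

(* Combinatorial model of (generic, trivalent, two-switch) measured train
   tracks on the once-punctured torus  S = (R^2 \ Z^2)/Z^2, up to isotopy. *)
From Stdlib Require Import Reals ZArith Bool.
Open Scope R_scope.

(* The three half-branches at a trivalent switch: the one on the "large"
   side of the switch, and the two on the other side, [Lf]/[Rt] being the one
   on the left/right when one stands on the switch and faces from the
   large side towards the two-branch side (standard orientation of R^2). *)
Inductive role := Big | Lf | Rt.

(* Half-branches ("darts"): (switch, role); the two switches are [false]
   and [true]. *)
Definition dart := (bool * role)%type.

(* Z^2 = H_1 of the torus = deck group of R^2 -> T^2. *)
Definition vec := (Z * Z)%type.
Definition vadd (a b : vec) : vec := ((fst a + fst b)%Z, (snd a + snd b)%Z).
Definition vsub (a b : vec) : vec := ((fst a - fst b)%Z, (snd a - snd b)%Z).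
Definition vzero : vec := (0%Z, 0%Z).

(* A measured train track (combinatorial data + isotopy marking + measure):
   - [tpair d] is the other end of the branch whose end is the dart d;
   - [tdisp d] is the marking: choosing a lift in R^2 of each switch, the lift
     of the branch leaving the lift of switch [fst d] through d ends at
     (lift of switch [fst (tpair t d)]) + [tdisp t d]  (a deck translation);
   - [twt d] is the weight (measure) of the branch containing the dart d. *)
Record mtt := MTT { tpair : dart -> dart ; tdisp : dart -> vec ; twt : dart -> R }.

(* Isotopy of measured train tracks: an isomorphism of the switch structures
   (a permutation of the two switches preserving roles, i.e. orientation)
   matching the branches, the weights, and the markings up to change of the
   chosen lifts of the switches (c). *)
Definition tt_equiv (t1 t2 : mtt) : Prop :=
  exists (f : bool -> bool) (c : bool -> vec),
    (forall b b', f b = f b' -> b = b') /\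
    forall d : dart,
      let fd := fun e : dart => (f (fst e), snd e) in
      tpair t2 (fd d) = fd (tpair t1 d) /\
      tdisp t2 (fd d) = vsub (vadd (tdisp t1 d) (c (fst d))) (c (fst (tpair t1 d))) /\
      twt t2 (fd d) = twt t1 d.

(* Switch [false] is at the SW end
   and switch [true] at the NE end of the large branch (the NW and SE right
   angles at the crossing (1/2,1/2) of the slope-0 and slope-infinity curves
   being flattened); at [false] the W arm (horizontal) is on the right and the
   S arm (vertical) on the left; at [true] the E arm (horizontal) is on the
   right and the N arm (vertical) on the left. *)
Definition tau0 (v : R * R) : mtt :=
  MTT (fun d => (negb (fst d), snd d))
      (fun d => match d with
                | (_, Big) => vzero
                | (false, Rt) => ((-1)%Z, 0%Z)
                | (true, Rt) => (1%Z, 0%Z)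
                | (false, Lf) => (0%Z, (-1)%Z)
                | (true, Lf) => (0%Z, 1%Z)
                end)
      (fun d => match snd d with
                | Big => fst v + snd v
                | Rt => fst v
                | Lf => snd v
                end).

(* The homeomorphism f_A of S induced by A in SL(2,Z) (acting on column
   vectors), and its action phi(tau,mu) = (phi(tau), phi_* mu). *)
Definition hact (A : vec -> vec) (t : mtt) : mtt :=
  MTT (tpair t) (fun d => A (tdisp t d)) (twt t).

Definition matL (a : vec) : vec := (fst a, (fst a + snd a)%Z).
Definition matR (a : vec) : vec := ((fst a + snd a)%Z, snd a).
Definition fL := hact matL.
Definition fR := hact matR.

Definition Linv_mu (v : R * R) : R * R := (fst v, snd v - fst v).
Definition Rinv_mu (v : R * R) : R * R := (fst v - snd v, snd v).

Definition is_large (t : mtt) (u : bool) : Prop := tpair t (u, Big) = (negb u, Big).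

(* ... and of maximal weight among large branches.  (A two-switch trivalent
   track has at most one large branch, so a maximal splitting splits exactly
   this branch.) *)
Definition large_max (t : mtt) (u : bool) : Prop :=
  is_large t u /\ forall u', is_large t u' -> twt t (u', Big) <= twt t (u, Big).

(* Shift of the markings when all new switches are placed near the lift of
   the large branch starting at the lift of switch u. *)
Definition tsh (t : mtt) (u : bool) (d : dart) : vec :=
  if Bool.eqb (fst d) u then vzero else tdisp t (u, Big).

(* Left split along the large branch: the new small (diagonal) branch joins
   the two [Lf] darts; [rhoinvL] sends a non-diagonal new dart to the old
   small dart whose branch now ends there. *)
Definition rhoL (d : dart) : dart :=
  match d with (b, Lf) => (b, Big) | (b, Rt) => (negb b, Rt) | (b, Big) => (b, Big) end.
Definition rhoinvL (d : dart) : dart :=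
  match d with (b, Big) => (b, Lf) | (b, Rt) => (negb b, Rt) | (b, Lf) => (b, Lf) end.

Definition splitL (u : bool) (t : mtt) : mtt :=
  MTT (fun x => match snd x with
                | Lf => (negb (fst x), Lf)
                | _ => rhoL (tpair t (rhoinvL x)) end)
      (fun x => match snd x with
                | Lf => vzero
                | _ => let d := rhoinvL x in
                       vsub (vadd (tdisp t d) (tsh t u d)) (tsh t u (tpair t d)) end)
      (fun x => match snd x with
                | Lf => twt t (u, Lf) - twt t (negb u, Rt)
                | _ => twt t (rhoinvL x) end).

Definition rhoR (d : dart) : dart :=
  match d with (b, Rt) => (b, Big) | (b, Lf) => (negb b, Lf) | (b, Big) => (b, Big) end.
Definition rhoinvR (d : dart) : dart :=
  match d with (b, Big) => (b, Rt) | (b, Lf) => (negb b, Lf) | (b, Rt) => (b, Rt) end.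

Definition splitR (u : bool) (t : mtt) : mtt :=
  MTT (fun x => match snd x with
                | Rt => (negb (fst x), Rt)
                | _ => rhoR (tpair t (rhoinvR x)) end)
      (fun x => match snd x with
                | Rt => vzero
                | _ => let d := rhoinvR x in
                       vsub (vadd (tdisp t d) (tsh t u d)) (tsh t u (tpair t d)) end)
      (fun x => match snd x with
                | Rt => twt t (u, Rt) - twt t (negb u, Lf)
                | _ => twt t (rhoinvR x) end).

(* (t ⇀^L t'): t admits a maximal splitting which is a left splitting
   (the measure forces the left split: strict inequality), with result t'. *)
Definition max_left_split (t t' : mtt) : Prop :=
  exists u, large_max t u /\ twt t (negb u, Rt) < twt t (u, Lf) /\ t' = splitL u t.
Definition max_right_split (t t' : mtt) : Prop :=
  exists u, large_max t u /\ twt t (negb u, Lf) < twt t (u, Rt) /\ t' = splitR u t.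

Inductive nsteps (Rel : mtt -> mtt -> Prop) : nat -> mtt -> mtt -> Prop :=
| nsteps0 : forall t, nsteps Rel 0 t t
| nstepsS : forall n t1 t2 t3, Rel t1 t2 -> nsteps Rel n t2 t3 -> nsteps Rel (S n) t1 t3.

From Stdlib Require Import Reals ZArith Lia Lra.
Open Scope R_scope.

(* Every track met along the way is in standard form: each branch joins two
   half-branches of the same role, so the track is described by its three
   weights and the markings (a, r, l) of its big, right and left branches.
   A left split of a standard track is standard again, with weights
   (w_L, w_R, w_L - w_R); up to the choice of lifts and the exchange of the two
   switches, its relative markings (r - a, l - a) become (r - a + l - a, l - a),
   which is what L does to the markings ((-1,-k), (0,-1)) of f_L^k(tau_0).
   After i left splits the weights are (x + y - i x, x, y - i x), so the next
   maximal split is a left one as long as y > (i+1) x.  Right splits are the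
   mirror image. *)

Definition vopp (v : vec) : vec := ((- fst v)%Z, (- snd v)%Z).

Definition sign_at (b : bool) (v : vec) : vec := if b then vopp v else v.

Definition by_role {A : Type} (big rt lf : A) (ro : role) : A :=
  match ro with Big => big | Rt => rt | Lf => lf end.

Definition standard (t : mtt) (a r l : vec) (wB wR wL : R) : Prop :=
  (forall d, tpair t d = (negb (fst d), snd d)) /\
  (forall d, tdisp t d = sign_at (fst d) (by_role a r l (snd d))) /\
  (forall d, twt t d = by_role wB wR wL (snd d)).

Ltac vec_lia :=
  unfold vsub, vadd, vzero, sign_at, vopp in *; simpl in *;
  repeat match goal with H : @eq _ (pair _ _) (pair _ _) |- _ =>
    let E1 := fresh in let E2 := fresh in injection H as E1 E2 end;
  repeat split; f_equal; lia.

(* The second alternative exchanges the two switches. *)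
Definition markings_equiv (a r l a' r' l' : vec) : Prop :=
  exists c : vec,
    (a' = vadd a c /\ r' = vadd r c /\ l' = vadd l c) \/
    (a' = vsub c a /\ r' = vsub c r /\ l' = vsub c l).

Lemma standard_equiv t1 t2 a r l a' r' l' wB wR wL :
  standard t1 a r l wB wR wL -> standard t2 a' r' l' wB wR wL ->
  markings_equiv a r l a' r' l' -> tt_equiv t1 t2.
Proof.
  intros [P1 [D1 W1]] [P2 [D2 W2]] [c [[-> [-> ->]] | [-> [-> ->]]]].
  - exists (fun b => b), (fun b : bool => if b then vzero else c).
    split; [easy |].
    intros [b ro]; cbv zeta; rewrite P1, P2, D1, D2, W1, W2.
    destruct a, r, l, c, b, ro; vec_lia.
  - exists negb, (fun b : bool => if b then vzero else vopp c).
    split; [intros [|] [|]; easy |].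
    intros [b ro]; cbv zeta; rewrite P1, P2, D1, D2, W1, W2.
    destruct a, r, l, c, b, ro; vec_lia.
Qed.

Lemma standard_tau0 x y :
  standard (tau0 (x, y)) vzero ((-1)%Z, 0%Z) (0%Z, (-1)%Z) (x + y) x y.
Proof. repeat split; intros [[|] [| |]]; reflexivity. Qed.

Lemma standard_hact (A : vec -> vec) t a r l wB wR wL :
  (forall v, A (vopp v) = vopp (A v)) ->
  standard t a r l wB wR wL -> standard (hact A t) (A a) (A r) (A l) wB wR wL.
Proof.
  intros HA [P [D W]]; repeat split; intros [b ro]; simpl; auto.
  rewrite D; destruct b, ro; simpl; auto.
Qed.

Lemma standard_splitL t a r l wB wR wL :
  standard t a r l wB wR wL ->
  standard (splitL false t) (vsub l a) (vsub a r) vzero wL wR (wL - wR).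
Proof.
  intros [P [D W]]; repeat split; intros [[|] [| |]];
    unfold splitL, tsh, rhoinvL, rhoL; simpl; rewrite ?P, ?D, ?W; simpl; auto;
    destruct a, r, l; vec_lia.
Qed.

Lemma standard_splitR t a r l wB wR wL :
  standard t a r l wB wR wL ->
  standard (splitR false t) (vsub r a) vzero (vsub a l) wR (wR - wL) wL.
Proof.
  intros [P [D W]]; repeat split; intros [[|] [| |]];
    unfold splitR, tsh, rhoinvR, rhoR; simpl; rewrite ?P, ?D, ?W; simpl; auto;
    destruct a, r, l; vec_lia.
Qed.

Lemma markings_equiv_splitL a r l rho lam :
  markings_equiv a r l vzero rho lam ->
  markings_equiv (vsub l a) (vsub a r) vzero vzero (vadd rho lam) lam.
Proof.
  intros [c [(Ha & Hr & Hl) | (Ha & Hr & Hl)]]; exists lam; [right | left];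
    destruct a, r, l, rho, lam, c; vec_lia.
Qed.

Lemma markings_equiv_splitR a r l rho lam :
  markings_equiv a r l vzero rho lam ->
  markings_equiv (vsub r a) vzero (vsub a l) vzero rho (vadd lam rho).
Proof.
  intros [c [(Ha & Hr & Hl) | (Ha & Hr & Hl)]]; exists rho; [right | left];
    destruct a, r, l, rho, lam, c; vec_lia.
Qed.

Lemma standard_max_left_split t a r l wB wR wL :
  standard t a r l wB wR wL -> wR < wL -> max_left_split t (splitL false t).
Proof.
  intros [P [_ W]] Hw; exists false; repeat split.
  - unfold is_large; rewrite P; reflexivity.
  - intros u' _; rewrite !W; apply Rle_refl.
  - rewrite !W; exact Hw.
Qed.

Lemma standard_max_right_split t a r l wB wR wL :
  standard t a r l wB wR wL -> wL < wR -> max_right_split t (splitR false t).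
Proof.
  intros [P [_ W]] Hw; exists false; repeat split.
  - unfold is_large; rewrite P; reflexivity.
  - intros u' _; rewrite !W; apply Rle_refl.
  - rewrite !W; exact Hw.
Qed.

Lemma nsteps_iter (Rel : mtt -> mtt -> Prop) (f : mtt -> mtt) n t :
  (forall i, (i < n)%nat -> Rel (Nat.iter i f t) (Nat.iter (S i) f t)) ->
  nsteps Rel n t (Nat.iter n f t).
Proof.
  revert t; induction n as [|n IH]; intros t H; [constructor |].
  rewrite Nat.iter_succ_r; apply nstepsS with (f t); [apply (H 0%nat); lia |].
  apply IH; intros i Hi; rewrite <- !Nat.iter_succ_r; apply H; lia.
Qed.

Lemma Linv_mu_iter x y k : Nat.iter k Linv_mu (x, y) = (x, y - INR k * x).
Proof.
  induction k as [|k IH]; simpl Nat.iter; [f_equal; simpl; ring |].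
  rewrite IH, S_INR; unfold Linv_mu; simpl; f_equal; ring.
Qed.

Lemma Rinv_mu_iter x y k : Nat.iter k Rinv_mu (x, y) = (x - INR k * y, y).
Proof.
  induction k as [|k IH]; simpl Nat.iter; [f_equal; simpl; ring |].
  rewrite IH, S_INR; unfold Rinv_mu; simpl; f_equal; ring.
Qed.

Lemma matL_vopp v : matL (vopp v) = vopp (matL v).
Proof. destruct v; unfold matL, vopp; simpl; f_equal; lia. Qed.

Lemma matR_vopp v : matR (vopp v) = vopp (matR v).
Proof. destruct v; unfold matR, vopp; simpl; f_equal; lia. Qed.

Lemma fL_iter_tau0 x y k :
  standard (Nat.iter k fL (tau0 (x, y)))
    vzero ((-1)%Z, (- Z.of_nat k)%Z) (0%Z, (-1)%Z) (x + y) x y.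
Proof.
  induction k as [|k IH]; [apply standard_tau0 |].
  replace ((-1)%Z, (- Z.of_nat (S k))%Z) with (matL ((-1)%Z, (- Z.of_nat k)%Z))
    by (unfold matL; cbn [fst snd]; f_equal; lia).
  exact (standard_hact matL _ _ _ _ _ _ _ matL_vopp IH).
Qed.

Lemma fR_iter_tau0 x y k :
  standard (Nat.iter k fR (tau0 (x, y)))
    vzero ((-1)%Z, 0%Z) ((- Z.of_nat k)%Z, (-1)%Z) (x + y) x y.
Proof.
  induction k as [|k IH]; [apply standard_tau0 |].
  replace ((- Z.of_nat (S k))%Z, (-1)%Z) with (matR ((- Z.of_nat k)%Z, (-1)%Z))
    by (unfold matR; cbn [fst snd]; f_equal; lia).
  exact (standard_hact matR _ _ _ _ _ _ _ matR_vopp IH).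
Qed.

Lemma splitL_iter_tau0 x y k : exists a r l,
  standard (Nat.iter k (splitL false) (tau0 (x, y))) a r l
    (x + (y - INR k * x)) x (y - INR k * x) /\
  markings_equiv a r l vzero ((-1)%Z, (- Z.of_nat k)%Z) (0%Z, (-1)%Z).
Proof.
  induction k as [|k IH].
  - exists vzero, ((-1)%Z, 0%Z), (0%Z, (-1)%Z); split.
    + replace (y - INR 0 * x) with y by (simpl; ring); apply standard_tau0.
    + exists vzero; left; repeat split.
  - destruct IH as (a & r & l & Hstd & Hm).
    exists (vsub l a), (vsub a r), vzero; split.
    + replace (x + (y - INR (S k) * x)) with (y - INR k * x) by (rewrite S_INR; ring).
      replace (y - INR (S k) * x) with (y - INR k * x - x) by (rewrite S_INR; ring).
      exact (standard_splitL _ _ _ _ _ _ _ Hstd).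
    + replace ((-1)%Z, (- Z.of_nat (S k))%Z)
        with (vadd ((-1)%Z, (- Z.of_nat k)%Z) (0%Z, (-1)%Z))
        by (unfold vadd; cbn [fst snd]; f_equal; lia).
      exact (markings_equiv_splitL _ _ _ _ _ Hm).
Qed.

Lemma splitR_iter_tau0 x y k : exists a r l,
  standard (Nat.iter k (splitR false) (tau0 (x, y))) a r l
    (x - INR k * y + y) (x - INR k * y) y /\
  markings_equiv a r l vzero ((-1)%Z, 0%Z) ((- Z.of_nat k)%Z, (-1)%Z).
Proof.
  induction k as [|k IH].
  - exists vzero, ((-1)%Z, 0%Z), (0%Z, (-1)%Z); split.
    + replace (x - INR 0 * y) with x by (simpl; ring); apply standard_tau0.
    + exists vzero; left; repeat split.
  - destruct IH as (a & r & l & Hstd & Hm).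
    exists (vsub r a), vzero, (vsub a l); split.
    + replace (x - INR (S k) * y + y) with (x - INR k * y) by (rewrite S_INR; ring).
      replace (x - INR (S k) * y) with (x - INR k * y - y) by (rewrite S_INR; ring).
      exact (standard_splitR _ _ _ _ _ _ _ Hstd).
    + replace ((- Z.of_nat (S k))%Z, (-1)%Z)
        with (vadd ((- Z.of_nat k)%Z, (-1)%Z) ((-1)%Z, 0%Z))
        by (unfold vadd; cbn [fst snd]; f_equal; lia).
      exact (markings_equiv_splitR _ _ _ _ _ Hm).
Qed.

Lemma left_splittings x y q : 0 <= x -> INR q * x < y ->
  exists t, nsteps max_left_split q (tau0 (x, y)) t /\
            tt_equiv t (Nat.iter q fL (tau0 (Nat.iter q Linv_mu (x, y)))).
Proof.
  intros Hx Hxy; exists (Nat.iter q (splitL false) (tau0 (x, y))); split.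
  - apply nsteps_iter; intros i Hi.
    destruct (splitL_iter_tau0 x y i) as (a & r & l & Hstd & _).
    apply (standard_max_left_split _ _ _ _ _ _ _ Hstd).
    assert (Hiq : INR (S i) <= INR q) by (apply le_INR; lia).
    rewrite S_INR in Hiq; nra.
  - destruct (splitL_iter_tau0 x y q) as (a & r & l & Hstd & Hm).
    rewrite Linv_mu_iter.
    exact (standard_equiv _ _ _ _ _ _ _ _ _ _ _ Hstd (fL_iter_tau0 _ _ q) Hm).
Qed.

Lemma right_splittings x y p : 0 <= y -> INR p * y < x ->
  exists t, nsteps max_right_split p (tau0 (x, y)) t /\
            tt_equiv t (Nat.iter p fR (tau0 (Nat.iter p Rinv_mu (x, y)))).
Proof.
  intros Hy Hxy; exists (Nat.iter p (splitR false) (tau0 (x, y))); split.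
  - apply nsteps_iter; intros i Hi.
    destruct (splitR_iter_tau0 x y i) as (a & r & l & Hstd & _).
    apply (standard_max_right_split _ _ _ _ _ _ _ Hstd).
    assert (Hip : INR (S i) <= INR p) by (apply le_INR; lia).
    rewrite S_INR in Hip; nra.
  - destruct (splitR_iter_tau0 x y p) as (a & r & l & Hstd & Hm).
    rewrite Rinv_mu_iter.
    exact (standard_equiv _ _ _ _ _ _ _ _ _ _ _ Hstd (fR_iter_tau0 _ _ p) Hm).
Qed.

Theorem corollary3p11 (x y : R) (p q : nat) :
  0 <= x -> 0 <= y -> (0 < p)%nat -> (0 < q)%nat ->
  (y > INR q * x ->
     exists t, nsteps max_left_split q (tau0 (x, y)) t /\
               tt_equiv t (Nat.iter q fL (tau0 (Nat.iter q Linv_mu (x, y))))) /\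
  (x > INR p * y ->
     exists t, nsteps max_right_split p (tau0 (x, y)) t /\
               tt_equiv t (Nat.iter p fR (tau0 (Nat.iter p Rinv_mu (x, y))))).
Proof.
  intros Hx Hy _ _; split.
  - exact (left_splittings x y q Hx).
  - exact (right_splittings x y p Hy).
Qed.
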